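(* Let $N$ be a sub-sound pWF net, $M$ a sub-sound tWF net whose node set is disjoint from that of $N$, and $t^*$ a transition of $N$. Then the pWF net $N\otimes_{t^*}M$ is sub-sound.
   Context: Petri nets and markings. A Petri net is a triple $(P,T,F)$ with $P$ a finite set of places, $T$ a finite set of transitions, $P\cap T=\emptyset$, and $F\subseteq (P\times T)\cup(T\times P)$. For a node $x$, $\bullet x=\{y\mid (y,x)\in F\}$, $x\bullet=\{y\mid (x,y)\in F\}$. A marking is a multiset over $P$ (a function $P\to\mathbb N$); sets of places are identified with bags of multiplicity one, $+,-,\le$ are pointwise, and $k.m$ is the sum of $k$ copies of $m$. Transition $t$ is enabled at $m$ iff $\bullet t\le m$, firing gives $m-\bullet t+t\bullet$, and $m\xrightarrow{*}m'$ denotes reachability by a finite (possibly empty) firing sequence. Workflow nets. A pWF net is $(P,T,F,I,O)$ with $(P,T,F)$ a Petri net, $I,O\subseteq P$ non-empty, every node reachable by a directed path from some node of $I$, and some node of $O$ reachable from every node. A tWF net is the same with $I,O$ non-empty subsets of $T$. Input nodes may have incoming edges and output nodes outgoing edges. The place-completion $\mathrm{pc}(N)$ of a tWF net $N=(P,T,F,I,O)$ is obtained by adding two fresh places $p_i,p_o$ with edges $(p_i,t)$ for all $t\in I$ and $(t,p_o)$ for all $t\in O$, and taking input set $\{p_i\}$ and output set $\{p_o\}$. Sub-soundness. A pWF net is sub-sound if for all integers $k\ge k'\ge 0$ and every marking $m'$: if $k.I\xrightarrow{*}m'+k'.O$ then $m'\xrightarrow{*}(k-k').O$. A tWF net is sub-sound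 iff its place-completion is. Transition substitution. For a WF net $N=(P,T,F,I,O)$ and a tWF net $M=(P',T',F',I',O')$ with disjoint node sets and $t\in T$, $N\otimes_t M$ is obtained from $N$ by deleting $t$ and all edges incident to $t$, adding all nodes and edges of $M$, adding an edge $(q,t')$ for each $q\in\bullet_N t$ and $t'\in I'$, and an edge $(t',q)$ for each $t'\in O'$ and $q\in t\bullet_N$; its input set is $(I\setminus\{t\})\cup I'$ if $t\in I$ and $I$ otherwise, and its output set is $(O\setminus\{t\})\cup O'$ if $t\in O$ and $O$ otherwise. *)

From mathcomp Require Import all_boot.
From Stdlib Require Import Relations.
Set Implicit Arguments. Unset Strict Implicit. Unset Printing Implicit Defensive.

(* A net (P,T,F,I,O) whose nodes live in a finite ambient type V.
   Whether I,O are sets of places (pWF) or transitions (tWF) is imposed by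
   the well-formedness predicates below. *)
Record net (V : finType) := Net {
  places : {set V};
  trans  : {set V};
  flow   : {set V * V};
  inp    : {set V};
  outp   : {set V}
}.

Section NetDefs.
Variable V : finType.
Implicit Types (N : net V).

Definition nodes N : {set V} := places N :|: trans N.
Definition flowrel N : rel V := fun x y => (x, y) \in flow N.
Definition preset N (x : V) : {set V} := [set y | (y, x) \in flow N].
Definition postset N (x : V) : {set V} := [set y | (x, y) \in flow N].

Definition is_petri_net N : Prop :=
  [disjoint places N & trans N] /\
  (forall x y, (x, y) \in flow N ->
     (x \in places N /\ y \in trans N) \/ (x \in trans N /\ y \in places N)).

Definition wf_common N : Prop :=
  is_petri_net N /\ inp N != set0 /\ outp N != set0 /\
  (forall x, x \in nodes N -> exists2 i, i \in inp N & connect (flowrel N) i x) /\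
  (forall x, x \in nodes N -> exists2 o, o \in outp N & connect (flowrel N) x o).

Definition pWF N : Prop :=
  wf_common N /\ inp N \subset places N /\ outp N \subset places N.
Definition tWF N : Prop :=
  wf_common N /\ inp N \subset trans N /\ outp N \subset trans N.

(* Markings: multisets of nodes (functions V -> nat); only places ever carry
   tokens in reachable markings. *)
Definition marking := V -> nat.
Definition mset (A : {set V}) : marking := fun v => nat_of_bool (v \in A).
Definition madd (m1 m2 : marking) : marking := fun v => m1 v + m2 v.
Definition mscale (k : nat) (m : marking) : marking := fun v => k * m v.

Definition enabled N (t : V) (m : marking) : Prop :=
  forall p, mset (preset N t) p <= m p.
Definition fire N (t : V) (m : marking) : marking :=
  fun p => m p - mset (preset N t) p + mset (postset N t) p.
Definition step N (m m' : marking) : Prop :=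
  exists2 t, t \in trans N & enabled N t m /\ m' = fire N t m.
Definition reach N : relation marking := clos_refl_trans marking (step N).

Definition subsound N : Prop :=
  forall (k k' : nat) (m' : marking), k' <= k ->
    reach N (mscale k (mset (inp N))) (madd m' (mscale k' (mset (outp N)))) ->
    reach N m' (mscale (k - k') (mset (outp N))).

End NetDefs.

(* Place completion of a tWF net: nodes in V + bool, with inr false = p_i and
   inr true = p_o the two fresh places. *)
Definition pc (V : finType) (M : net V) : net (V + bool)%type :=
  {| places := (inl @: places M) :|: [set inr false; inr true];
     trans  := inl @: trans M;
     flow   := [set (inl e.1, inl e.2) | e in flow M]
               :|: [set (inr false, inl t) | t in inp M]
               :|: [set (inl t, inr true) | t in outp M];
     inp    := [set inr false];
     outp   := [set inr true] |}.

Definition tsubsound (V : finType) (M : net V) : Prop := subsound (pc M).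

Definition subst_net (V : finType) (N : net V) (t : V) (M : net V) : net V :=
  {| places := places N :|: places M;
     trans  := (trans N :\ t) :|: trans M;
     flow   := [set e in flow N | (e.1 != t) && (e.2 != t)]
               :|: flow M
               :|: [set (q, t') | q in preset N t, t' in inp M]
               :|: [set (t', q) | t' in outp M, q in postset N t];
     inp    := if t \in inp N then (inp N :\ t) :|: inp M else inp N;
     outp   := if t \in outp N then (outp N :\ t) :|: outp M else outp N |}.

From mathcomp Require Import all_boot zify.
From Stdlib Require Import Relations FunctionalExtensionality.

(* Every marking m reachable in K
   from k.I is "decomposed": for some numbers a of started and b of finished
   copies of M (firings of input, resp. output, transitions of M),
   - in pc(M), the part of m on the places of M plus b.p_o is reachable from
     a.p_i, and
   - in N, the part of m on the places of N plus (a-b).t• is reachable from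
     k.I (each started copy of M is accounted for by a firing of t in N).
   Sub-soundness of pc(M) bounds b by a, which keeps this invariant under the
   firing of transitions of M.  If m = m' + k'.O, sub-soundness of pc(M)
   drives the M-part of m' to (a-b).p_o, which K realises as (a-b).t•, and
   sub-soundness of N then reaches (k-k').O; runs of N are simulated in K by
   replacing each firing of t by a complete run of M. *)
Set Implicit Arguments. Unset Strict Implicit. Unset Printing Implicit Defensive.

Ltac pointwise_arith :=
  repeat match goal with |- context [?x \in ?A] => case: (x \in A) => //= end;
  lia.

Lemma marking_ext (W : finType) (m1 m2 : marking W) :
  (forall v, m1 v = m2 v) -> m1 = m2.
Proof. exact: functional_extensionality. Qed.

Lemma reach_simulation (W1 W2 : finType) (N1 : net W1) (N2 : net W2)
    (f : marking W1 -> marking W2) m1 m2 :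
  (forall a b, step N1 a b -> step N2 (f a) (f b)) ->
  reach N1 m1 m2 -> reach N2 (f m1) (f m2).
Proof.
move=> sim; elim=> [a b /sim|a|a b c _ h1 _ h2]; first exact: rt_step.
  exact: rt_refl.
exact: rt_trans h1 h2.
Qed.

Lemma in_preset (W : finType) (N : net W) x y :
  (y \in preset N x) = ((y, x) \in flow N).
Proof. by rewrite inE. Qed.

Lemma in_postset (W : finType) (N : net W) x y :
  (y \in postset N x) = ((x, y) \in flow N).
Proof. by rewrite inE. Qed.

Lemma mscaleD (W : finType) a c (m : marking W) :
  mscale (a + c) m = madd (mscale a m) (mscale c m).
Proof. by apply: marking_ext => v; rewrite /madd /mscale mulnDl. Qed.

Section Reachability.
Variables (W : finType) (N : net W).

Lemma step_madd m1 m2 m : step N m1 m2 -> step N (madd m1 m) (madd m2 m).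
Proof.
case=> u uT [en ->]; exists u => //; split.
  by move=> p; have := en p; rewrite /madd; lia.
by apply: marking_ext => p; have := en p; rewrite /madd /fire; lia.
Qed.

Lemma reach_madd m1 m2 m : reach N m1 m2 -> reach N (madd m1 m) (madd m2 m).
Proof.
have sim a b : step N a b -> step N (madd a m) (madd b m) by exact: step_madd.
exact: reach_simulation sim.
Qed.

Lemma reach_invariant (P : marking W -> Prop) m1 m2 :
  P m1 -> (forall a b, P a -> step N a b -> P b) -> reach N m1 m2 -> P m2.
Proof.
move=> P1 IH /clos_rt_rtn1_iff h; elim: h => // a b st _ Pa; exact: IH Pa st.
Qed.

Lemma reach_sink_mono p m1 m2 :
  (forall u, p \notin preset N u) -> reach N m1 m2 -> m1 p <= m2 p.
Proof.
move=> sink; elim=> [a b [u _ [_ ->]]|a|a b c _ h1 _ h2] //.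
- by rewrite /fire /mset (negbTE (sink u)); lia.
- exact: leq_trans h1 h2.
Qed.

Section PetriNet.
Hypothesis netN : is_petri_net N.

Lemma flow_nodes x y : (x, y) \in flow N -> x \in nodes N /\ y \in nodes N.
Proof.
move=> /(proj2 netN); rewrite /nodes !inE.
by case=> -[-> ->]; rewrite ?orbT.
Qed.

Lemma preset_nodes x v : v \in preset N x -> v \in nodes N.
Proof. by rewrite in_preset => /flow_nodes []. Qed.

Lemma postset_nodes x v : v \in postset N x -> v \in nodes N.
Proof. by rewrite in_postset => /flow_nodes []. Qed.

Lemma trans_not_place x : x \in trans N -> x \notin places N.
Proof. by move=> xT; rewrite (disjointFl netN.1 xT). Qed.

Lemma flow_trans_trans x y :
  (x, y) \in flow N -> x \in trans N -> y \in trans N -> False.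
Proof.
move=> /(proj2 netN) [] [xP yP] xT yT.
- by move: (trans_not_place xT); rewrite xP.
- by move: (trans_not_place yT); rewrite yP.
Qed.

End PetriNet.
End Reachability.

Section PlaceCompletion.
Variables (V : finType) (M : net V).

Local Notation p_i := (inr false : V + bool).
Local Notation p_o := (inr true : V + bool).

Lemma flow_pc x y :
  ((x, y) \in flow (pc M)) =
  match x, y with
  | inl a, inl b => (a, b) \in flow M
  | inr false, inl b => b \in inp M
  | inl a, inr true => a \in outp M
  | _, _ => false
  end.
Proof.
rewrite /= !inE; apply/idP/idP.
  by case/orP => [/orP[]|] /imsetP [c cin [-> ->]] //=; case: c cin.
case: x => [a|[]]; case: y => [b|[]] //= h.
- by apply/orP; left; apply/orP; left; apply/imsetP; exists (a, b).
- by apply/orP; right; apply/imsetP; exists a.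
- by apply/orP; left; apply/orP; right; apply/imsetP; exists b.
Qed.

Lemma preset_pc_inl u v : (inl v \in preset (pc M) (inl u)) = (v \in preset M u).
Proof. by rewrite !in_preset flow_pc. Qed.

Lemma preset_pc_source u : (p_i \in preset (pc M) (inl u)) = (u \in inp M).
Proof. by rewrite !in_preset flow_pc. Qed.

Lemma preset_pc_sink x : (p_o \in preset (pc M) x) = false.
Proof. by rewrite !in_preset flow_pc; case: x => [|[]]. Qed.

Lemma postset_pc_inl u v : (inl v \in postset (pc M) (inl u)) = (v \in postset M u).
Proof. by rewrite !in_postset flow_pc. Qed.

Lemma postset_pc_sink u : (p_o \in postset (pc M) (inl u)) = (u \in outp M).
Proof. by rewrite !in_postset flow_pc. Qed.

Lemma postset_pc_source x : (p_i \in postset (pc M) x) = false.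
Proof. by rewrite !in_postset flow_pc; case: x => [|[]]. Qed.

Lemma trans_pc x : x \in trans (pc M) -> exists2 u, x = inl u & u \in trans M.
Proof. by case/imsetP => u uT ->; exists u. Qed.

Hypothesis soundM : tsubsound M.

(* A single token on p_i can be driven to a single token on p_o:
   sub-soundness with k = 1 and k' = 0. *)
Lemma pc_complete_run : reach (pc M) (mset (inp (pc M))) (mset (outp (pc M))).
Proof.
have := soundM (m' := mset (inp (pc M))) (leq0n 1).
have scale1 (A : {set V + bool}) : mscale 1 (mset A) = mset A.
  by apply: marking_ext => z; rewrite /mscale mul1n.
rewrite subn0 !scale1; apply.
have -> : madd (mset (inp (pc M))) (mscale 0 (mset (outp (pc M)))) = mset (inp (pc M)).
  by apply: marking_ext => z; rewrite /madd /mscale addn0.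
exact: rt_refl.
Qed.

(* A run of pc(M) started with a tokens on p_i never puts more than a tokens
   on p_o: otherwise sub-soundness applied to a of them would have to empty
   p_o, which no transition consumes from. *)
Lemma pc_outputs_bounded a x :
  reach (pc M) (mscale a (mset (inp (pc M)))) x -> x p_o <= a.
Proof.
move=> run; rewrite leqNgt; apply/negP => big.
pose rest := fun z => if z == p_o then x z - a else x z.
have split_x : madd rest (mscale a (mset (outp (pc M)))) = x.
  apply: marking_ext => z; rewrite /rest /madd /mscale /mset /= in_set1.
  by case: eqP => [->|_]; lia.
have := soundM (m' := rest) (leqnn a); rewrite split_x => /(_ run).
move=> /(reach_sink_mono (fun u => negbT (preset_pc_sink u))).
by rewrite /rest /mscale /mset /= in_set1 eqxx subnn; lia.
Qed.

End PlaceCompletion.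

Section Substitution.
Variables (V : finType) (N M : net V) (t : V).
Hypotheses (netN : is_petri_net N) (netM : is_petri_net M).
Hypothesis disjNM : [disjoint nodes N & nodes M].
Hypotheses (inpM : inp M \subset trans M) (outpM : outp M \subset trans M).
Hypothesis tT : t \in trans N.

Local Notation K := (subst_net N t M).
Local Notation p_i := (inr false : V + bool).
Local Notation p_o := (inr true : V + bool).

(* Nodes of N are not nodes of M.  The consequences for presets and postsets
   are stated as boolean implications, the form used by pointwise_arith. *)
Lemma nodesN_notin_M v : v \in nodes N -> (v \in nodes M) = false.
Proof. exact: disjointFr disjNM. Qed.

Lemma preset_outside u v : (v \in preset N u) ==> (v \notin nodes M).
Proof. by apply/implyP => /(preset_nodes netN)/nodesN_notin_M ->. Qed.

Lemma postset_outside u v : (v \in postset N u) ==> (v \notin nodes M).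
Proof. by apply/implyP => /(postset_nodes netN)/nodesN_notin_M ->. Qed.

Lemma preset_inside u v : (v \in preset M u) ==> (v \in nodes M).
Proof. exact/implyP/preset_nodes. Qed.

Lemma postset_inside u v : (v \in postset M u) ==> (v \in nodes M).
Proof. exact/implyP/postset_nodes. Qed.

Lemma preset_subst_inside u v : u \in nodes M ->
  (v \in preset K u) = (v \in preset M u) || (u \in inp M) && (v \in preset N t).
Proof.
move=> uM; rewrite !inE /=.
have -> : ((v, u) \in flow N) = false.
  by apply/negP => /(flow_nodes netN) [_ /nodesN_notin_M]; rewrite uM.
have -> : ((v, u) \in [set (t', q) | t' in outp M, q in postset N t]) = false.
  apply/negP => /imset2P [a q _ qP [_ uq]].
  by move: (postset_nodes netN qP) => /nodesN_notin_M; rewrite -uq uM.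
rewrite orbF; congr (_ || _).
apply/imset2P/andP => [[q a qP aI [-> ->]]|[aI qP]]; first by rewrite inE in qP.
by exists v u => //; rewrite inE.
Qed.

Lemma postset_subst_inside u v : u \in nodes M ->
  (v \in postset K u) = (v \in postset M u) || (u \in outp M) && (v \in postset N t).
Proof.
move=> uM; rewrite !inE /=.
have -> : ((u, v) \in flow N) = false.
  by apply/negP => /(flow_nodes netN) [/nodesN_notin_M]; rewrite uM.
have -> : ((u, v) \in [set (q, t') | q in preset N t, t' in inp M]) = false.
  apply/negP => /imset2P [q a qP _ [uq _]].
  by move: (preset_nodes netN qP) => /nodesN_notin_M; rewrite -uq uM.
rewrite /= orbF; congr (_ || _).
apply/imset2P/andP => [[a q aO qP [-> ->]]|[aO qP]]; first by rewrite inE in qP.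
by exists u v => //; rewrite inE.
Qed.

Lemma preset_subst_outside u v : u \in trans N ->
  (v \in preset K u) = (v \in preset N u) && (u != t).
Proof.
move=> uT; have uM : (u \in nodes M) = false by rewrite nodesN_notin_M // !inE uT orbT.
rewrite !inE /=.
have -> : ((v, u) \in flow M) = false.
  by apply/negP => /(flow_nodes netM) []; rewrite uM.
have -> : ((v, u) \in [set (q, t') | q in preset N t, t' in inp M]) = false.
  apply/negP => /imset2P [q a _ aI [_ ua]].
  by move: (subsetP inpM _ aI); rewrite -ua => uTM; rewrite !inE uTM orbT in uM.
have -> : ((v, u) \in [set (t', q) | t' in outp M, q in postset N t]) = false.
  apply/negP => /imset2P [a q _ qP [_ uq]].
  by rewrite -uq in_postset in qP; exact: (flow_trans_trans netN qP tT uT).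
rewrite !orbF; case vu: ((v, u) \in flow N) => //=.
suff vt : v != t by rewrite vt.
by apply/eqP => vt; rewrite vt in vu; exact: (flow_trans_trans netN vu tT uT).
Qed.

Lemma postset_subst_outside u v : u \in trans N ->
  (v \in postset K u) = (v \in postset N u) && (u != t).
Proof.
move=> uT; have uM : (u \in nodes M) = false by rewrite nodesN_notin_M // !inE uT orbT.
rewrite !inE /=.
have -> : ((u, v) \in flow M) = false.
  by apply/negP => /(flow_nodes netM) []; rewrite uM.
have -> : ((u, v) \in [set (t', q) | t' in outp M, q in postset N t]) = false.
  apply/negP => /imset2P [a q aO _ [ua _]].
  by move: (subsetP outpM _ aO); rewrite -ua => uTM; rewrite !inE uTM orbT in uM.
have -> : ((u, v) \in [set (q, t') | q in preset N t, t' in inp M]) = false.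
  apply/negP => /imset2P [q a qP _ [uq _]].
  by rewrite -uq in_preset in qP; exact: (flow_trans_trans netN qP uT tT).
rewrite !orbF; case uv: ((u, v) \in flow N) => //=.
suff vt : v != t by rewrite vt andbT.
by apply/eqP => vt; rewrite vt in uv; exact: (flow_trans_trans netN uv uT tT).
Qed.

(* The marking of K that plays the pc(M)-marking x on top of a background
   marking b of N: tokens on p_i stand for tokens on the preset of t and
   tokens on p_o for tokens on the postset of t. *)
Definition realize (b : marking V) (x : marking (V + bool)%type) : marking V :=
  fun v => b v + x (inl v) + x p_i * mset (preset N t) v
           + x p_o * mset (postset N t) v.

Lemma realize_step b x y :
  step (pc M) x y -> step K (realize b x) (realize b y).
Proof.
case=> z zT [en ->]; case: (trans_pc zT) en => u -> uT en.
have uM : u \in nodes M by rewrite !inE uT orbT.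
have pre_disj p : (p \in preset M u) ==> (p \notin preset N t).
  apply/implyP => /(preset_nodes netM) pM.
  by apply/negP => /(preset_nodes netN)/nodesN_notin_M; rewrite pM.
have post_disj p : (p \in postset M u) ==> (p \notin postset N t).
  apply/implyP => /(postset_nodes netM) pM.
  by apply/negP => /(postset_nodes netN)/nodesN_notin_M; rewrite pM.
exists u; first by rewrite !inE uT orbT.
split.
  move=> p; have := en (inl p); have := en p_i.
  rewrite /realize /mset (preset_subst_inside p uM) preset_pc_inl preset_pc_source.
  pointwise_arith.
apply: marking_ext => p; have := en (inl p); have := en p_i.
have := pre_disj p; have := post_disj p.
rewrite /realize /fire /mset (preset_subst_inside p uM) (postset_subst_inside p uM).
rewrite preset_pc_inl preset_pc_source postset_pc_inl postset_pc_source.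
rewrite preset_pc_sink postset_pc_sink.
pointwise_arith.
Qed.

Lemma realize_reach b x y :
  reach (pc M) x y -> reach K (realize b x) (realize b y).
Proof. exact/reach_simulation/realize_step. Qed.

Hypothesis soundM : tsubsound M.

(* Every run of N is a run of K up to the expansion of each firing of t into
   a complete run of M. *)
Lemma subst_step_of_step x y : step N x y -> reach K x y.
Proof.
case=> u uT [en ->]; case: (eqVneq u t) en => [->|ut] en.
  pose rest := fun p => x p - mset (preset N t) p.
  have := realize_reach rest (pc_complete_run soundM).
  have -> : realize rest (mset (inp (pc M))) = x.
    apply: marking_ext => p; have := en p.
    rewrite /realize /rest /mset /= !in_set1 /=; pointwise_arith.
  have -> : realize rest (mset (outp (pc M))) = fire N t x.
    apply: marking_ext => p; have := en p.
    rewrite /realize /rest /fire /mset /= !in_set1 /=; pointwise_arith.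
  by [].
apply: rt_step; exists u; first by rewrite !inE ut uT.
split.
  by move=> p; rewrite /mset (preset_subst_outside p uT) ut andbT; exact: en.
apply: marking_ext => p.
rewrite /fire /mset (preset_subst_outside p uT) (postset_subst_outside p uT).
by rewrite ut !andbT.
Qed.

Lemma subst_reach_of_reach x y : reach N x y -> reach K x y.
Proof.
elim=> [a b /subst_step_of_step //|a|a b c _ h1 _ h2]; first exact: rt_refl.
exact: rt_trans h1 h2.
Qed.

Definition outside (m : marking V) : marking V :=
  fun v => if v \in nodes M then 0 else m v.

Definition inside (m : marking V) (b : nat) : marking (V + bool)%type :=
  fun z => match z with
           | inl v => if v \in nodes M then m v else 0
           | inr true => b
           | inr false => 0
           end.

(* The invariant of runs of K from k.I: for some numbers a of started and b
   of finished copies of M, the inside of m together with b.p_o is reachable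
   in pc(M) from a.p_i, and the outside of m together with (a-b).t• is
   reachable in N from k.I. *)
Definition decomposed (k : nat) (m : marking V) : Prop :=
  exists a b,
    reach (pc M) (mscale a (mset (inp (pc M)))) (inside m b) /\
    reach N (mscale k (mset (inp N)))
            (madd (outside m) (mscale (a - b) (mset (postset N t)))).

Lemma decomposed_step_outside k m u :
  u \in trans N -> u != t -> enabled K u m ->
  decomposed k m -> decomposed k (fire K u m).
Proof.
move=> uT ut en [a [b [runM runN]]]; exists a, b; split.
  have -> : inside (fire K u m) b = inside m b.
    apply: marking_ext => -[v|[]] //=.
    have := preset_outside u v; have := postset_outside u v.
    rewrite /fire /mset (preset_subst_outside v uT) (postset_subst_outside v uT).
    rewrite ut !andbT.
    pointwise_arith.
  exact: runM.
apply: rt_trans runN _; apply: rt_step; exists u => //; split.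
  move=> p; have := en p; have := preset_outside u p.
  rewrite /madd /outside /mscale /mset (preset_subst_outside p uT) ut andbT.
  pointwise_arith.
apply: marking_ext => p; have := en p; have := preset_outside u p.
have := postset_outside u p.
rewrite /madd /outside /mscale /fire /mset.
rewrite (preset_subst_outside p uT) (postset_subst_outside p uT) ut !andbT.
pointwise_arith.
Qed.

Lemma inside_step m b u : u \in trans M -> enabled K u m ->
  step (pc M) (madd (inside m b) (mscale (u \in inp M) (mset (inp (pc M)))))
              (inside (fire K u m) (b + (u \in outp M))).
Proof.
move=> uT en; have uM : u \in nodes M by rewrite !inE uT orbT.
exists (inl u); first exact: imset_f.
split.
  move=> -[p|[]]; rewrite /madd /mscale /mset /= ?in_set1 /=.
  - rewrite preset_pc_inl; have := en p; have := preset_inside u p.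
    rewrite /mset (preset_subst_inside p uM); pointwise_arith.
  - by rewrite preset_pc_sink.
  - by rewrite preset_pc_source; pointwise_arith.
apply: marking_ext => -[p|[]]; rewrite /fire /madd /mscale /mset /= ?in_set1 /=.
- have := en p; have := preset_inside u p; have := postset_inside u p.
  have := preset_outside t p; have := postset_outside t p.
  rewrite /mset preset_pc_inl postset_pc_inl.
  rewrite (preset_subst_inside p uM) (postset_subst_inside p uM); pointwise_arith.
- by rewrite preset_pc_sink postset_pc_sink; pointwise_arith.
- by rewrite preset_pc_source postset_pc_source; pointwise_arith.
Qed.

(* On the outside, a transition u of M consumes from the preset of t if it is
   an input of M (mirrored in N by firing t early) and produces on the postset
   of t if it is an output of M (consuming one of the pending (a-b).t•). *)
Lemma outside_reach_inside m a b u : u \in trans M -> enabled K u m ->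
  b <= a -> b + (u \in outp M) <= a + (u \in inp M) ->
  reach N (madd (outside m) (mscale (a - b) (mset (postset N t))))
          (madd (outside (fire K u m))
                (mscale (a + (u \in inp M) - (b + (u \in outp M))) (mset (postset N t)))).
Proof.
move=> uT en ba; have uM : u \in nodes M by rewrite !inE uT orbT.
case uI: (u \in inp M) => /= bounded.
  apply: rt_step; exists t => //; split.
    move=> p; have := en p; have := preset_outside t p.
    rewrite /madd /outside /mscale /mset (preset_subst_inside p uM) uI.
    pointwise_arith.
  apply: marking_ext => p; have := bounded; have := en p.
  have := preset_inside u p; have := postset_inside u p.
  have := preset_outside t p; have := postset_outside t p.
  rewrite /madd /outside /mscale /fire /mset.
  rewrite (preset_subst_inside p uM) (postset_subst_inside p uM) uI.
  pointwise_arith.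
have -> : madd (outside (fire K u m))
               (mscale (a + 0 - (b + (u \in outp M))) (mset (postset N t)))
          = madd (outside m) (mscale (a - b) (mset (postset N t))).
  apply: marking_ext => p; have := bounded.
  have := preset_inside u p; have := postset_inside u p; have := postset_outside t p.
  rewrite /madd /outside /mscale /fire /mset.
  rewrite (preset_subst_inside p uM) (postset_subst_inside p uM) uI.
  pointwise_arith.
exact: rt_refl.
Qed.

(* A transition of M preserves the invariant; the new counters still satisfy
   finished <= started by sub-soundness of pc(M). *)
Lemma decomposed_step_inside k m u :
  u \in trans M -> enabled K u m -> decomposed k m -> decomposed k (fire K u m).
Proof.
move=> uT en [a [b [runM runN]]].
have runM' : reach (pc M) (mscale (a + (u \in inp M)) (mset (inp (pc M))))
                   (inside (fire K u m) (b + (u \in outp M))).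
  rewrite mscaleD; apply: rt_trans (reach_madd _ runM) _.
  exact/rt_step/inside_step.
have ba := pc_outputs_bounded soundM runM.
have bounded := pc_outputs_bounded soundM runM'.
exists (a + (u \in inp M)), (b + (u \in outp M)); split => //.
exact: rt_trans runN (outside_reach_inside uT en ba bounded).
Qed.

Hypotheses (inpN : inp N \subset places N) (outpN : outp N \subset places N).

Lemma inp_outside v : (v \in inp N) ==> (v \notin nodes M).
Proof. by apply/implyP => /(subsetP inpN) vP; rewrite nodesN_notin_M // !inE vP. Qed.

Lemma outp_outside v : (v \in outp N) ==> (v \notin nodes M).
Proof. by apply/implyP => /(subsetP outpN) vP; rewrite nodesN_notin_M // !inE vP. Qed.

Lemma decomposed_init k : decomposed k (mscale k (mset (inp N))).
Proof.
exists 0, 0; split.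
  have -> : inside (mscale k (mset (inp N))) 0 = mscale 0 (mset (inp (pc M))).
    apply: marking_ext => -[v|[]] //=; have := inp_outside v.
    rewrite /mscale /mset; pointwise_arith.
  exact: rt_refl.
have -> : madd (outside (mscale k (mset (inp N)))) (mscale (0 - 0) (mset (postset N t)))
          = mscale k (mset (inp N)).
  apply: marking_ext => v; have := inp_outside v.
  rewrite /madd /outside /mscale /mset; pointwise_arith.
exact: rt_refl.
Qed.

Lemma decomposed_reach k m : reach K (mscale k (mset (inp N))) m -> decomposed k m.
Proof.
move=> run; apply: (reach_invariant (P := decomposed k) (decomposed_init k) _ run).
move=> a _ dec [u uK [en ->]]; move: uK; rewrite !inE => /orP [/andP [ut uT]|uT].
  exact: decomposed_step_outside.
exact: decomposed_step_inside.
Qed.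

Lemma realize_parts m : realize (outside m) (inside m 0) = m.
Proof.
by apply: marking_ext => v; rewrite /realize /outside /=; case: (v \in nodes M); lia.
Qed.

Lemma realize_outputs b c :
  realize b (mscale c (mset (outp (pc M)))) = madd b (mscale c (mset (postset N t))).
Proof.
by apply: marking_ext => v; rewrite /realize /madd /mscale /mset /= !in_set1 /=; lia.
Qed.

(* Closing an invariant marking of the form m' + k'.O: sub-soundness of pc(M)
   empties the inside of m' into (a-b).p_o, realised as (a-b).t• in K, from
   which sub-soundness of N (simulated in K) reaches (k-k').O. *)
Lemma decomposed_final k k' m' : subsound N -> k' <= k ->
  decomposed k (madd m' (mscale k' (mset (outp N)))) ->
  reach K m' (mscale (k - k') (mset (outp N))).
Proof.
move=> soundN le [a [b [runM runN]]].
have {}runM : reach (pc M) (inside m' 0) (mscale (a - b) (mset (outp (pc M)))).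
  apply: (soundM (pc_outputs_bounded soundM runM)).
  have <- : inside (madd m' (mscale k' (mset (outp N)))) b
            = madd (inside m' 0) (mscale b (mset (outp (pc M)))).
    apply: marking_ext => -[v|[]]; rewrite /madd /mscale /mset /= ?in_set1 /=; try lia.
    by have := outp_outside v; pointwise_arith.
  exact: runM.
have {}runN : reach N (madd (outside m') (mscale (a - b) (mset (postset N t))))
                      (mscale (k - k') (mset (outp N))).
  apply: (soundN k k' _ le).
  have <- : madd (outside (madd m' (mscale k' (mset (outp N)))))
                 (mscale (a - b) (mset (postset N t)))
            = madd (madd (outside m') (mscale (a - b) (mset (postset N t))))
                   (mscale k' (mset (outp N))).
    apply: marking_ext => v; have := outp_outside v.
    rewrite /madd /outside /mscale /mset; pointwise_arith.
  exact: runN.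
have := realize_reach (outside m') runM; rewrite realize_parts realize_outputs.
by move=> runK; apply: rt_trans runK (subst_reach_of_reach runN).
Qed.

(* Since t is a transition and the interface of N consists of places, the
   interface of K is that of N. *)
Lemma subst_interface : inp K = inp N /\ outp K = outp N.
Proof.
have tP : t \notin places N by exact: trans_not_place.
have notI : (t \in inp N) = false by apply/negP => /(subsetP inpN); apply/negP.
have notO : (t \in outp N) = false by apply/negP => /(subsetP outpN); apply/negP.
by rewrite /= notI notO.
Qed.

Theorem subst_subsound : subsound N -> subsound K.
Proof.
move=> soundN k k' m' le; have [-> ->] := subst_interface.
by move=> /decomposed_reach; exact: decomposed_final.
Qed.

End Substitution.

Theorem mainTheorem13 (V : finType) (N M : net V) (tstar : V) :
  pWF N -> subsound N ->
  tWF M -> tsubsound M ->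
  [disjoint nodes N & nodes M] ->
  tstar \in trans N ->
  subsound (subst_net N tstar M).
Proof.
move=> [[netN _] [inpN outpN]] soundN [[netM _] [inpM outpM]] soundM disj tT.
exact: (subst_subsound netN netM disj inpM outpM tT soundM inpN outpN soundN).
Qed.
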